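(* Let $K\ge 2$ and let the global alphabet be $\mathcal{A}=[K]=\{1,\dots,K\}$. Let $\Omega_1,\Omega_2\subseteq[K]$ be the (random) sets of parties $P_1$ and $P_2$, and assume $|\Omega_2|$ is fixed and publicly known. Consider any protocol in which $P_2$ sends queries $Q^{[\Omega_2]}_{n}$ to the $N_1$ databases of $P_1$, and database $n$ returns an answer $A^{[\Omega_2]}_n$ satisfying $H(A^{[\Omega_2]}_n\mid Q^{[\Omega_2]}_n,\Omega_1,\mathcal{R}_S)=0$, where $\mathcal{R}_S$ is common randomness shared by $P_1$'s databases. Define the one-symbol messages $W_k=\mathbf{1}\{k\in\Omega_1\}$, $k\in[K]$ (so $L=1$), and the desired index set $\Omega=[K]\setminus\Omega_2$, so $|\Omega|=P=K-|\Omega_2|$. Then the protocol satisfies the three PSU constraints (i) PSU reliability: $H(\Omega_1\cup\Omega_2\mid Q^{[\mathcal{P}_2]}_{[N_1]},A^{[\mathcal{P}_2]}_{[N_1]},\Omega_2)=0$ for every realization $\mathcal{P}_2$; (ii) $P_2$ privacy: $I(\Omega_2;Q^{[\Omega_2]}_{n},A^{[\Omega_2]}_{n},\Omega_1,\mathcal{R}_S)=0$ for all $n\in[N_1]$; (iii) $P_1$ privacy: $I(E_{1,\Omega_2};Q^{[\mathcal{P}_2]}_{[N_1]},A^{[\mathcal{P}_2]}_{[N_1]},\Omega_2)=0$ for every realization $\mathcal{P}_2$, where $E_{1,\Omega_2}=(\mathbf{1}\{k\in\Omega_1\})_{k\in\Omega_2}$; if and only if, viewed as a multi-message symmetric PIR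 protocol with messages $W_{[K]}$ and desired set $\Omega$, it satisfies (i') MM-SPIR reliability: $H(W_{\mathcal{P}}\mid Q_{[N_1]}^{[\mathcal{P}]},A_{[N_1]}^{[\mathcal{P}]},\mathcal{P})=0$ for every realization $\mathcal{P}$ of $\Omega$; (ii') user privacy: $I(\Omega;Q_n^{[\Omega]},A_n^{[\Omega]},W_{[K]},\mathcal{R}_S)=0$ for all $n$; (iii') database privacy: $I(W_{[K]\setminus\mathcal{P}};Q_{[N_1]}^{[\mathcal{P}]},A_{[N_1]}^{[\mathcal{P}]},\mathcal{P})=0$ for every realization $\mathcal{P}$. In this sense PSU is equivalent to MM-SPIR with $L=1$ and $P=|\mathcal{A}|-|\Omega_2|$.
   Context: Notation: $[Z]=\{1,\dots,Z\}$. For a set $\mathcal{S}$ of indices, $W_{\mathcal{S}}=\{W_k:k\in\mathcal{S}\}$. Party $P_2$ (the querying party) generates queries without knowledge of $\Omega_1$; $P_1$'s $N_1$ databases store $\Omega_1$ in replicated form, do not collude, and share common randomness $\mathcal{R}_S$ unknown to $P_2$. *)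

From HB Require Import structures.
From mathcomp Require Import all_boot all_order all_algebra.
From mathcomp Require Import reals exp.
Set Implicit Arguments. Unset Strict Implicit. Unset Printing Implicit Defensive.
Import Order.TTheory GRing.Theory Num.Theory.
Local Open Scope ring_scope.

(* Finite probability space: sample space T (finType) with weights p : T -> R.
   Random variables are functions T -> U with U a finType. *)
Section Info.
Variables (R : realType) (T : finType).

Definition Pr (p : T -> R) (E : pred T) : R := \sum_(t | E t) p t.

(* the conditional distribution given the event E (assumed of positive probability) *)
Definition condp (p : T -> R) (E : pred T) : T -> R :=
  fun t => if E t then p t / Pr p E else 0.

Definition pmf (U : finType) (p : T -> R) (X : T -> U) (u : U) : R :=
  Pr p [pred t | X t == u].

Definition xlog (a b : R) : R := if a == 0 then 0 else a * ln (a / b).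

Definition entropy (U : finType) (p : T -> R) (X : T -> U) : R :=
  - \sum_(u : U) xlog (pmf p X u) 1.

Definition cond_entropy (U V : finType) (p : T -> R) (X : T -> U) (Y : T -> V) : R :=
  - \sum_(u : U) \sum_(v : V)
      xlog (pmf p (fun t => (X t, Y t)) (u, v)) (pmf p Y v).

Definition mutual_info (U V : finType) (p : T -> R) (X : T -> U) (Y : T -> V) : R :=
  \sum_(u : U) \sum_(v : V)
      xlog (pmf p (fun t => (X t, Y t)) (u, v)) (pmf p X u * pmf p Y v).
End Info.

(* W_S : the sub-tuple (w_k)_{k in S} of w, encoded as a function that is
   [None] outside S (S may itself be random). *)
Definition restr (K : nat) (S : {set 'I_K}) (w : {ffun 'I_K -> bool})
  : {ffun 'I_K -> option bool} :=
  [ffun k => if k \in S then Some (w k) else None].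

(* The PSU / MM-SPIR correspondence is a change of variables.  Entropy and
   mutual information of finitely valued random variables depend only on the
   partitions of the sample space they induce (more precisely, on their traces
   on the support of the probability weights).  The proof therefore has two
   layers:
   - a general invariance principle: if X and X' (resp. Y and Y') separate the
     same pairs of points of positive probability, then H(X | Y) = H(X' | Y')
     and I(X ; Y) = I(X' ; Y');
   - three pointwise identifications for the protocol, one per constraint:
     Omega_2 and Omega = [K] \ Omega_2 determine each other; Omega_1 and the
     message vector W_[K] determine each other; and on the event
     Omega_2 = P_2, the union Omega_1 u P_2 determines and is determined by
     W restricted to [K] \ P_2, while W restricted to Omega_2 is W restricted
     to [K] \ Omega.
   Conditioning on Omega = P is the same as conditioning on Omega_2 = [K] \ P,
   so each PSU constraint equals the corresponding MM-SPIR constraint, and the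
   theorem follows by reindexing P = [K] \ P_2. *)
From HB Require Import structures.
From mathcomp Require Import all_boot all_order all_algebra.
From mathcomp Require Import reals exp.
From Stdlib Require Import FunctionalExtensionality.
Set Implicit Arguments. Unset Strict Implicit.
Import Order.TTheory GRing.Theory Num.Theory.
Local Open Scope ring_scope.

Section Invariance.
Variables (R : realType) (T : finType).

Lemma xlogE (a b : R) : xlog a b = a * ln (a / b).
Proof. by rewrite /xlog; case: eqP => [->|]; rewrite ?mul0r. Qed.

Lemma sum_xlog_pmf (U : finType) (p : T -> R) (X : T -> U) (c : U -> R) :
  \sum_(u : U) xlog (pmf p X u) (c u) =
  \sum_(t : T) p t * ln (Pr p [pred t' | X t' == X t] / c (X t)).
Proof.
rewrite (partition_big X xpredT) //=; apply: eq_bigr => u _.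
rewrite xlogE /pmf /Pr big_distrl /=; apply: eq_big => [t|t /eqP ->] //.
Qed.

Lemma cond_entropyE (U V : finType) (p : T -> R) (X : T -> U) (Y : T -> V) :
  cond_entropy p X Y = - \sum_(t : T) p t *
    ln (Pr p [pred t' | (X t', Y t') == (X t, Y t)] /
        Pr p [pred t' | Y t' == Y t]).
Proof.
rewrite /cond_entropy pair_big /= -(sum_xlog_pmf _ _ (fun v => pmf p Y v.2)).
by congr (- _); apply: eq_bigr => -[].
Qed.

Lemma mutual_infoE (U V : finType) (p : T -> R) (X : T -> U) (Y : T -> V) :
  mutual_info p X Y = \sum_(t : T) p t *
    ln (Pr p [pred t' | (X t', Y t') == (X t, Y t)] /
        (Pr p [pred t' | X t' == X t] * Pr p [pred t' | Y t' == Y t])).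
Proof.
rewrite /mutual_info pair_big /=.
rewrite -(sum_xlog_pmf _ _ (fun w => pmf p X w.1 * pmf p Y w.2)).
by apply: eq_bigr => -[].
Qed.

Definition same_partition (p : T -> R) (U U' : finType)
    (X : T -> U) (X' : T -> U') : Prop :=
  forall t t', p t != 0 -> p t' != 0 -> (X t' == X t) = (X' t' == X' t).

Lemma Pr_same_partition (p : T -> R) (U U' : finType)
    (X : T -> U) (X' : T -> U') t :
  same_partition p X X' -> p t != 0 ->
  Pr p [pred t' | X t' == X t] = Pr p [pred t' | X' t' == X' t].
Proof.
move=> sXX' pt; rewrite /Pr big_mkcond [RHS]big_mkcond.
apply: eq_bigr => t' _ /=.
by have [->|/(sXX' t t' pt) ->] := eqVneq (p t') 0; rewrite ?if_same.
Qed.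

Lemma same_partition_pair (p : T -> R) (U U' V V' : finType)
    (X : T -> U) (X' : T -> U') (Y : T -> V) (Y' : T -> V') :
  same_partition p X X' -> same_partition p Y Y' ->
  same_partition p (fun t => (X t, Y t)) (fun t => (X' t, Y' t)).
Proof. by move=> sX sY t t' pt pt'; rewrite !xpair_eqE sX // sY. Qed.

Lemma cond_entropy_same_partition (p : T -> R) (U U' V V' : finType)
    (X : T -> U) (X' : T -> U') (Y : T -> V) (Y' : T -> V') :
  same_partition p X X' -> same_partition p Y Y' ->
  cond_entropy p X Y = cond_entropy p X' Y'.
Proof.
move=> sX sY; rewrite !cond_entropyE; congr (- _); apply: eq_bigr => t _.
have [->|pt] := eqVneq (p t) 0; first by rewrite !mul0r.
by rewrite (Pr_same_partition (same_partition_pair sX sY) pt)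
           (Pr_same_partition sY pt).
Qed.

Lemma mutual_info_same_partition (p : T -> R) (U U' V V' : finType)
    (X : T -> U) (X' : T -> U') (Y : T -> V) (Y' : T -> V') :
  same_partition p X X' -> same_partition p Y Y' ->
  mutual_info p X Y = mutual_info p X' Y'.
Proof.
move=> sX sY; rewrite !mutual_infoE; apply: eq_bigr => t _.
have [->|pt] := eqVneq (p t) 0; first by rewrite !mul0r.
by rewrite (Pr_same_partition (same_partition_pair sX sY) pt)
           (Pr_same_partition sY pt) (Pr_same_partition sX pt).
Qed.

Lemma condp_support (p : T -> R) (E : pred T) t : condp p E t != 0 -> E t.
Proof. by rewrite /condp; case: (E t); rewrite ?eqxx. Qed.

Lemma eq_Pr (p : T -> R) (E E' : pred T) : E =1 E' -> Pr p E = Pr p E'.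
Proof. by move=> eE; rewrite /Pr (eq_bigl _ _ eE). Qed.

Lemma eq_condp (p : T -> R) (E E' : pred T) :
  E =1 E' -> condp p E = condp p E'.
Proof.
move=> eE; apply: functional_extensionality => t.
by rewrite /condp eE (eq_Pr p eE).
Qed.
End Invariance.

Section PSUasSPIR.
Variables (R : realType) (T : finType) (p : T -> R) (K N1 : nat).
Variables (QT AT RT : finType) (Om1 Om2 : T -> {set 'I_K}) (RS : T -> RT).
Variables (Q : 'I_N1 -> T -> QT) (A : 'I_N1 -> T -> AT).

Local Notation W t := [ffun k : 'I_K => k \in Om1 t].
Local Notation Om t := (~: Om2 t).
Local Notation QA t := ([ffun n => Q n t], [ffun n => A n t]).

Lemma Om_event (P2 : {set 'I_K}) :
  [pred t | Om t == ~: P2] =1 [pred t | Om2 t == P2].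
Proof. by move=> t; rewrite /= (inj_eq (@setC_inj _)). Qed.

Lemma same_partition_transcript (q : T -> R) :
  same_partition q (fun t => (QA t, Om2 t)) (fun t => (QA t, Om t)).
Proof. by move=> t t' _ _; rewrite !xpair_eqE (inj_eq (@setC_inj _)). Qed.

Lemma W_eq t t' : (W t' == W t) = (Om1 t' == Om1 t).
Proof.
apply/eqP/eqP => [eW|-> //]; apply/setP => k.
by move/ffunP: eW => /(_ k); rewrite !ffunE.
Qed.

(* Reliability: on the event Omega_2 = P_2, recovering Omega_1 u P_2 is the
   same as recovering the messages W_k for k outside P_2. *)
Lemma reliability_eq (P2 : {set 'I_K}) :
  cond_entropy (condp p [pred t | Om2 t == P2])
    (fun t => Om1 t :|: Om2 t) (fun t => (QA t, Om2 t)) =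
  cond_entropy (condp p [pred t | Om t == ~: P2])
    (fun t => restr (~: P2) (W t)) (fun t => (QA t, Om t)).
Proof.
rewrite (eq_condp p (Om_event P2)).
apply: cond_entropy_same_partition; last exact: same_partition_transcript.
move=> t t' /condp_support /eqP-> /condp_support /eqP->.
apply/eqP/eqP => [eU|eW].
- apply/ffunP => k; rewrite !ffunE in_setC; case: ifP => // kNP2.
  by move/setP: eU => /(_ k); rewrite !inE (negbTE kNP2) !orbF => ->.
- apply/setP => k; move/ffunP: eW => /(_ k); rewrite !inE !ffunE in_setC.
  by case: (k \in P2) => [|[]]; rewrite ?orbT ?orbF.
Qed.

(* Privacy of P_2: Omega_2 and Omega, resp. Omega_1 and W_[K], determine each
   other. *)
Lemma user_privacy_eq (n : 'I_N1) :
  mutual_info p Om2 (fun t => (Q n t, A n t, Om1 t, RS t)) =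
  mutual_info p (fun t => Om t) (fun t => (Q n t, A n t, W t, RS t)).
Proof.
apply: mutual_info_same_partition => t t' _ _; first by rewrite (inj_eq (@setC_inj _)).
by rewrite !xpair_eqE W_eq.
Qed.

(* Privacy of P_1: on the event Omega_2 = P_2, the leaked entries W_{Omega_2}
   are exactly the undesired messages W_{[K] \ Omega}. *)
Lemma database_privacy_eq (P2 : {set 'I_K}) :
  mutual_info (condp p [pred t | Om2 t == P2])
    (fun t => restr (Om2 t) (W t)) (fun t => (QA t, Om2 t)) =
  mutual_info (condp p [pred t | Om t == ~: P2])
    (fun t => restr (~: (~: P2)) (W t)) (fun t => (QA t, Om t)).
Proof.
rewrite (eq_condp p (Om_event P2)) setCK.
apply: mutual_info_same_partition; last exact: same_partition_transcript.
by move=> t t' /condp_support /eqP-> /condp_support /eqP->.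
Qed.
End PSUasSPIR.

Theorem theorem1
  (R : realType) (T : finType) (p : T -> R)
  (p_ge0 : forall t, 0 <= p t) (p_sum1 : \sum_(t : T) p t = 1)
  (K : nat) (HK : (2 <= K)%N) (N1 : nat)
  (QT AT RT : finType)
  (Om1 Om2 : T -> {set 'I_K}) (RS : T -> RT)
  (Q : 'I_N1 -> T -> QT) (A : 'I_N1 -> T -> AT)
  (* |Omega_2| is fixed (and publicly known) *)
  (m : nat) (Hm : forall t, 0 < p t -> #|Om2 t| = m)
  (* P_2 generates its queries (and Omega_2) without knowledge of (Omega_1, R_S) *)
  (Hqry : mutual_info p (fun t => ([ffun n => Q n t], Om2 t))
                        (fun t => (Om1 t, RS t)) = 0)
  (* answers are deterministic functions of the query, Omega_1 and R_S *)
  (Hans : forall n : 'I_N1,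
     cond_entropy p (A n) (fun t => (Q n t, Om1 t, RS t)) = 0) :
  let W := fun t => [ffun k : 'I_K => k \in Om1 t] in
  let Om := fun t => ~: Om2 t in
  let QA := fun t => ([ffun n => Q n t], [ffun n => A n t]) in
  ( (* (i) PSU reliability *)
    (forall P2 : {set 'I_K}, 0 < Pr p [pred t | Om2 t == P2] ->
       cond_entropy (condp p [pred t | Om2 t == P2])
         (fun t => Om1 t :|: Om2 t) (fun t => (QA t, Om2 t)) = 0)
    (* (ii) P_2 privacy *)
    /\ (forall n : 'I_N1,
       mutual_info p Om2 (fun t => (Q n t, A n t, Om1 t, RS t)) = 0)
    (* (iii) P_1 privacy *)
    /\ (forall P2 : {set 'I_K}, 0 < Pr p [pred t | Om2 t == P2] ->
       mutual_info (condp p [pred t | Om2 t == P2])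
         (fun t => restr (Om2 t) (W t)) (fun t => (QA t, Om2 t)) = 0) )
  <->
  ( (* (i') MM-SPIR reliability *)
    (forall P : {set 'I_K}, 0 < Pr p [pred t | Om t == P] ->
       cond_entropy (condp p [pred t | Om t == P])
         (fun t => restr P (W t)) (fun t => (QA t, Om t)) = 0)
    (* (ii') user privacy *)
    /\ (forall n : 'I_N1,
       mutual_info p Om (fun t => (Q n t, A n t, W t, RS t)) = 0)
    (* (iii') database privacy *)
    /\ (forall P : {set 'I_K}, 0 < Pr p [pred t | Om t == P] ->
       mutual_info (condp p [pred t | Om t == P])
         (fun t => restr (~: P) (W t)) (fun t => (QA t, Om t)) = 0) ).
Proof.
move=> W Om QA; rewrite {}/W {}/Om {}/QA.
(* Each SPIR condition for P is the PSU condition for P_2 = [K] \ P. *)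
have PrE P2 := eq_Pr p (Om_event Om2 P2).
split=> -[rel [priv2 priv1]]; (split; [|split]).
- move=> P; rewrite -[P]setCK -reliability_eq PrE; exact: rel.
- by move=> n; rewrite -user_privacy_eq.
- move=> P; rewrite -[P]setCK -database_privacy_eq PrE; exact: priv1.
- by move=> P2; rewrite -PrE reliability_eq; exact: rel.
- by move=> n; rewrite user_privacy_eq; exact: priv2.
- by move=> P2; rewrite -PrE database_privacy_eq; exact: priv1.
Qed.
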